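(* Let $k\geq 1$ be an integer. For every integer $n$ with $2^{k-1}<n<2^k$, the minimal Colless index satisfies $c_n<2^{k-1}$; i.e. $\max_{n\in(2^{k-1},2^k)}c_n<2^{k-1}$.
   Context: A rooted binary tree with $n\geq 2$ leaves is a rooted tree whose root has degree 2 and all other internal nodes have degree 3; for $n=1$ it is a single node. For an internal node $v$ with children $v_1,v_2$, let $\kappa(v_i)$ be the number of leaves descending from $v_i$ ($1$ if a leaf). The Colless index is $\mathcal{C}(T)=\sum_v|\kappa(v_1)-\kappa(v_2)|$ over internal nodes $v$; $c_n$ is its minimum over all rooted binary trees with $n$ leaves. *)

From mathcomp Require Import all_boot.
From mathcomp Require Import boolp.
Set Implicit Arguments. Unset Strict Implicit. Unset Printing Implicit Defensive.

(* Rooted binary trees (unlabelled, ordered children; the Colless index is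
   symmetric so ordering is irrelevant). *)
Inductive btree : Type :=
| Leaf : btree
| Node : btree -> btree -> btree.

Fixpoint leaves (t : btree) : nat :=
  match t with
  | Leaf => 1
  | Node l r => leaves l + leaves r
  end.

Definition absdiff (a b : nat) : nat := (a - b) + (b - a).

Fixpoint colless (t : btree) : nat :=
  match t with
  | Leaf => 0
  | Node l r => absdiff (leaves l) (leaves r) + colless l + colless r
  end.

Fixpoint caterpillar (n : nat) : btree :=
  match n with
  | 0 => Leaf
  | m.+1 => Node (caterpillar m) Leaf
  end.

Lemma leaves_caterpillar n : leaves (caterpillar n) = n.+1.
Proof. by elim: n => //= n ->; rewrite addn1. Qed.

(* c is the Colless index of some tree with max(n,1) leaves
   (classical boolean reflection of the Prop) *)
Definition colless_attained (n c : nat) : bool :=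
  `[< exists t, leaves t = n.-1.+1 /\ colless t = c >].

Lemma colless_attained_ex n : exists c, colless_attained n c.
Proof.
exists (colless (caterpillar n.-1)); apply/asboolP; exists (caterpillar n.-1).
by rewrite leaves_caterpillar.
Qed.

(* c_n : minimum Colless index over rooted binary trees with n leaves
   (meaningful for n >= 1; for n = 0 it defaults to c_1 = 0). *)
Definition min_colless (n : nat) : nat :=
  ex_minn (@colless_attained_ex n).

From mathcomp Require Import all_boot.
From mathcomp Require Import zify boolp.

(* Splitting [n] leaves into halves [odd n + n./2] and [n./2] costs [odd n] at the
   root.  If [2^k.+1 <= n <= 2^k.+2], both halves lie in [[2^k, 2^k.+1]], so by
   induction on [k] the balanced tree has Colless index at most
   [1 + 2 (2^k - 1) = 2^k.+1 - 1] whenever [2^k <= n <= 2^k.+1]. *)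

Lemma leaves_gt0 (t : btree) : 0 < leaves t.
Proof. by elim: t => //= l + r _; apply: ltn_addr. Qed.

Lemma min_colless_le (t : btree) : min_colless (leaves t) <= colless t.
Proof.
rewrite /min_colless; case: ex_minnP => c _; apply.
by apply/asboolP; exists t; rewrite prednK ?leaves_gt0.
Qed.

Lemma balanced_colless_lt k n :
  2 ^ k <= n <= 2 ^ k.+1 -> exists2 t, leaves t = n & colless t < 2 ^ k.
Proof.
elim: k n => [|k IH] n.
  by case: n => [|[|[|n]]] //= _; [exists Leaf | exists (Node Leaf Leaf)].
rewrite !(expnS 2 k.+1) expnS => /andP[lo hi].
have split_n := odd_double_half n; rewrite -addnn in split_n.
have [ta La Ca] : exists2 t, leaves t = odd n + n./2 & colless t < 2 ^ k.
  by apply: IH; rewrite expnS; case: (odd n) split_n; lia.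
have [tb Lb Cb] : exists2 t, leaves t = n./2 & colless t < 2 ^ k.
  by apply: IH; rewrite expnS; case: (odd n) split_n; lia.
exists (Node ta tb); first by rewrite /= La Lb; lia.
by rewrite /= La Lb /absdiff; case: (odd n); lia.
Qed.

Theorem lemma8 (k n : nat) :
  1 <= k -> 2 ^ (k - 1) < n < 2 ^ k -> min_colless n < 2 ^ (k - 1).
Proof.
case: k => // k _; rewrite subSS subn0 expnS => /andP[lo hi].
have [t <- Ct] : exists2 t, leaves t = n & colless t < 2 ^ k.
  by apply: balanced_colless_lt; rewrite expnS; lia.
exact: leq_ltn_trans (min_colless_le t) Ct.
Qed.
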